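(* Let $k^0_{rw},k^0_{rg},\mu_w,\mu_g,f_{mmob},\mathrm{epdry}>0$, let $n_w,n_g\ge 2$, $S_{wc},S_{gr}\ge0$ with $S_{wc}+S_{gr}<1$, $\mathrm{fmdry}\in\mathbb{R}$, and take $\mathrm{fmsurf}=C_{\max}$ and $\mathrm{epsurf}=1$. For $(S,C)\in[0,1]^2$ define $S_w=S_{wc}+S(1-S_{wc}-S_{gr})$, $$k_{rw}(S)=k^0_{rw}S^{n_w},\quad k_{rg}(S)=k^0_{rg}(1-S)^{n_g},\quad F_2(S)=\tfrac12+\tfrac1\pi\arctan\big(\mathrm{epdry}(S_w-\mathrm{fmdry})\big),$$ $$k^f_{rg}(S,C)=\frac{k_{rg}(S)}{1+f_{mmob}\,C\,F_2(S)},\qquad f(S,C)=\frac{k_{rw}(S)}{k_{rw}(S)+(\mu_w/\mu_g)\,k^f_{rg}(S,C)}.$$ Then $f\in\mathscr{C}^2([0,1]^2)$, $f(0,C)=0$, $f(1,C)=1$ and $\partial_Sf(0,C)=\partial_Sf(1,C)=0$ for every $C\in[0,1]$; moreover $\partial_Sf(S,C)>0$ and $\partial_Cf(S,C)>0$ for all $S\in(0,1)$, $C\in[0,1]$.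
   Context: This is the (normalized) water fractional flow function of the CMG-STARS local-equilibrium foam model: $S$ is normalized water saturation, $C=C_s^w/C_{\max}$ normalized surfactant concentration; with $\mathrm{fmsurf}=C_{\max}$, $\mathrm{epsurf}=1$ the surfactant factor $F_1$ equals $C$ on $[0,1]$, and the foam mobility reduction factor is $FM=(1+f_{mmob}F_1F_2)^{-1}$. *)

From Stdlib Require Import Reals Lra.
From Coquelicot Require Import Coquelicot.
Open Scope R_scope.

(* Real power with the convention x^y = 0 for x <= 0 (used only for x in [0,1]
   and y >= 2 > 0, where 0^y = 0 is the correct value). *)
Definition rpow (x y : R) : R := if Rle_dec x 0 then 0 else Rpower x y.

Definition I01 (x : R) : Prop := 0 <= x <= 1.

(* Derivative of g at x within the set D (one-sided at endpoints of [0,1]). *)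
Definition is_deriv_within (D : R -> Prop) (g : R -> R) (x l : R) : Prop :=
  filterlim (fun t => (g t - g x) / (t - x))
    (within (fun t => D t /\ t <> x) (locally x)) (locally l).

Definition dS (f : R -> R -> R) (S C l : R) : Prop :=
  is_deriv_within I01 (fun t => f t C) S l.
Definition dC (f : R -> R -> R) (S C l : R) : Prop :=
  is_deriv_within I01 (fun c => f S c) C l.

Definition cont_on_square (g : R -> R -> R) : Prop :=
  forall S C, I01 S -> I01 C ->
    filterlim (fun p : R * R => g (fst p) (snd p))
      (within (fun p : R * R => I01 (fst p) /\ I01 (snd p)) (locally (S, C)))
      (locally (g S C)).

Definition C2_on_unit_square (f : R -> R -> R) : Prop :=
  exists fS fC fSS fSC fCS fCC : R -> R -> R,
    cont_on_square f /\ cont_on_square fS /\ cont_on_square fC /\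
    cont_on_square fSS /\ cont_on_square fSC /\ cont_on_square fCS /\
    cont_on_square fCC /\
    forall S C, I01 S -> I01 C ->
      dS f S C (fS S C) /\ dC f S C (fC S C) /\
      dS fS S C (fSS S C) /\ dC fS S C (fSC S C) /\
      dS fC S C (fCS S C) /\ dC fC S C (fCC S C).

(* Model ingredients (fmsurf = C_max, epsurf = 1, so F1 = C). *)
Definition Sw (Swc Sgr S : R) : R := Swc + S * (1 - Swc - Sgr).
Definition krw (krw0 nw S : R) : R := krw0 * rpow S nw.
Definition krg (krg0 ng S : R) : R := krg0 * rpow (1 - S) ng.
Definition F2 (epdry fmdry Swc Sgr S : R) : R :=
  / 2 + / PI * atan (epdry * (Sw Swc Sgr S - fmdry)).
Definition krgf (krg0 ng fmmob epdry fmdry Swc Sgr S C : R) : R :=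
  krg krg0 ng S / (1 + fmmob * C * F2 epdry fmdry Swc Sgr S).
Definition fracflow (krw0 krg0 muw mug nw ng fmmob epdry fmdry Swc Sgr : R)
  (S C : R) : R :=
  krw krw0 nw S /
    (krw krw0 nw S + (muw / mug) * krgf krg0 ng fmmob epdry fmdry Swc Sgr S C).

(* Since
      kw = kw' = 0 at S = 0 and kg = kg' = 0 at S = 1 we get the boundary
      values, and kw, kw', kgf > 0 > kgf_S, kgf_C on (0,1) give monotonicity. *)
From Stdlib Require Import Reals Lra Psatz.
From Coquelicot Require Import Coquelicot.
Open Scope R_scope.

Section LimitAlgebra.
Context {T : Type} {F : (T -> Prop) -> Prop} {FF : Filter F}.

Lemma lim_plus (a b : T -> R) (la lb : R) :
  filterlim a F (locally la) -> filterlim b F (locally lb) ->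
  filterlim (fun t => a t + b t) F (locally (la + lb)).
Proof.
intros Ha Hb. apply (filterlim_comp_2 a b Rplus Ha Hb).
exact (@filterlim_plus _ R_NormedModule la lb).
Qed.

Lemma lim_opp (a : T -> R) (la : R) :
  filterlim a F (locally la) -> filterlim (fun t => - a t) F (locally (- la)).
Proof.
intros Ha. apply (filterlim_comp _ _ _ a Ropp F (locally la)); [exact Ha|].
exact (@filterlim_opp _ R_NormedModule la).
Qed.

Lemma lim_mult (a b : T -> R) (la lb : R) :
  filterlim a F (locally la) -> filterlim b F (locally lb) ->
  filterlim (fun t => a t * b t) F (locally (la * lb)).
Proof.
intros Ha Hb. apply (filterlim_comp_2 a b Rmult Ha Hb).
exact (@filterlim_mult R_AbsRing la lb).
Qed.

Lemma lim_inv (a : T -> R) (la : R) :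
  la <> 0 -> filterlim a F (locally la) ->
  filterlim (fun t => / a t) F (locally (/ la)).
Proof.
intros Hl Ha. apply (filterlim_comp _ _ _ a Rinv F (locally la)); [exact Ha|].
apply (filterlim_Rbar_inv (Finite la)). intros E. apply Hl. injection E. auto.
Qed.
End LimitAlgebra.

Lemma ball_R_abs (a e b : R) : ball a e b <-> Rabs (b - a) < e.
Proof. reflexivity. Qed.

(** * One-sided derivatives within a set *)

Definition punctured (D : R -> Prop) (x : R) : (R -> Prop) -> Prop :=
  within (fun t => D t /\ t <> x) (locally x).

Lemma punctured_id (D : R -> Prop) (x : R) :
  filterlim (fun t => t) (punctured D x) (locally x).
Proof. intros P HP. unfold filtermap, punctured, within. apply filter_imp with P; auto. Qed.

Lemma punctured_forall (D : R -> Prop) (x : R) (P : R -> Prop) :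
  (forall t, D t -> t <> x -> P t) -> punctured D x P.
Proof. intros H. unfold punctured, within. apply filter_forall. intros t [Dt Ht]. auto. Qed.

Section DerivWithin.
Variable D : R -> Prop.

Lemma deriv_cont (g : R -> R) (x l : R) : is_deriv_within D g x l ->
  filterlim g (punctured D x) (locally (g x)).
Proof.
intros H.
apply filterlim_ext_loc with (fun t => g x + (g t - g x) / (t - x) * (t - x)).
- apply punctured_forall. intros t _ Ht. field. lra.
- replace (locally (g x)) with (locally (g x + l * (x - x))) by (f_equal; ring).
  apply lim_plus; [apply filterlim_const|].
  apply lim_mult; [exact H|].
  apply lim_plus; [apply punctured_id|apply filterlim_const].
Qed.

Lemma deriv_eq (g : R -> R) (x l l' : R) :
  is_deriv_within D g x l -> l = l' -> is_deriv_within D g x l'.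
Proof. intros H <-. exact H. Qed.

Lemma deriv_ext (g h : R -> R) (x l : R) : (forall t, D t -> g t = h t) -> D x ->
  is_deriv_within D g x l -> is_deriv_within D h x l.
Proof.
intros E Dx H. apply filterlim_ext_loc with (2 := H).
apply punctured_forall. intros t Dt _. rewrite !E; auto.
Qed.

Lemma deriv_const (k x : R) : is_deriv_within D (fun _ => k) x 0.
Proof.
apply filterlim_ext_loc with (fun _ => 0); [|apply filterlim_const].
apply punctured_forall. intros t _ Ht. field. lra.
Qed.

Lemma deriv_id (x : R) : is_deriv_within D (fun t => t) x 1.
Proof.
apply filterlim_ext_loc with (fun _ => 1); [|apply filterlim_const].
apply punctured_forall. intros t _ Ht. field. lra.
Qed.

Lemma deriv_plus (g h : R -> R) (x lg lh : R) :
  is_deriv_within D g x lg -> is_deriv_within D h x lh ->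
  is_deriv_within D (fun t => g t + h t) x (lg + lh).
Proof.
intros Hg Hh.
apply filterlim_ext_loc with (fun t => (g t - g x) / (t - x) + (h t - h x) / (t - x)).
- apply punctured_forall. intros t _ Ht. field. lra.
- apply lim_plus; auto.
Qed.

Lemma deriv_opp (g : R -> R) (x l : R) :
  is_deriv_within D g x l -> is_deriv_within D (fun t => - g t) x (- l).
Proof.
intros Hg. apply filterlim_ext_loc with (fun t => - ((g t - g x) / (t - x))).
- apply punctured_forall. intros t _ Ht. field. lra.
- apply lim_opp; auto.
Qed.

Lemma deriv_mult (g h : R -> R) (x lg lh : R) :
  is_deriv_within D g x lg -> is_deriv_within D h x lh ->
  is_deriv_within D (fun t => g t * h t) x (lg * h x + g x * lh).
Proof.
intros Hg Hh. pose proof (deriv_cont _ _ _ Hh) as Ch.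
apply filterlim_ext_loc
  with (fun t => (g t - g x) / (t - x) * h t + g x * ((h t - h x) / (t - x))).
- apply punctured_forall. intros t _ Ht. field. lra.
- apply lim_plus; apply lim_mult; auto. apply filterlim_const.
Qed.

Lemma deriv_scal (k : R) (g : R -> R) (x l : R) :
  is_deriv_within D g x l -> is_deriv_within D (fun t => k * g t) x (k * l).
Proof.
intros H. eapply deriv_eq; [exact (deriv_mult _ _ x _ _ (deriv_const k x) H)|cbv beta; ring].
Qed.

Lemma deriv_inv (g : R -> R) (x l : R) : (forall t, D t -> g t <> 0) -> D x ->
  is_deriv_within D g x l ->
  is_deriv_within D (fun t => / g t) x (- l * / (g x * g x)).
Proof.
intros Hn Dx Hg. pose proof (deriv_cont _ _ _ Hg) as Cg.
apply filterlim_ext_loc with (fun t => - ((g t - g x) / (t - x)) * / (g t * g x)).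
- apply punctured_forall. intros t Dt Ht. field. repeat split; auto. lra.
- apply lim_mult; [apply lim_opp; auto|].
  apply lim_inv; [apply Rmult_integral_contrapositive; auto|].
  apply lim_mult; auto. apply filterlim_const.
Qed.

Lemma deriv_div (g h : R -> R) (x lg lh : R) : (forall t, D t -> h t <> 0) -> D x ->
  is_deriv_within D g x lg -> is_deriv_within D h x lh ->
  is_deriv_within D (fun t => g t / h t) x ((lg * h x - g x * lh) / h x ^ 2).
Proof.
intros Hn Dx Hg Hh.
eapply deriv_eq; [exact (deriv_mult _ _ x _ _ Hg (deriv_inv _ _ _ Hn Dx Hh))|].
cbv beta. field. auto.
Qed.

Lemma deriv_within_of_derive_near (g h : R -> R) (x l : R) : D x ->
  is_derive h x l ->
  (exists d, 0 < d /\ forall t, D t -> Rabs (t - x) < d -> g t = h t) ->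
  is_deriv_within D g x l.
Proof.
intros Dx Hh (d & Hd & E). apply is_derive_Reals in Hh.
apply filterlim_locally. intros eps.
destruct (Hh eps (cond_pos eps)) as [del Hdel].
assert (Hm : 0 < Rmin del d) by (apply Rmin_pos; auto; apply cond_pos).
exists (mkposreal _ Hm). intros t Hb [Dt Ht]. change R in t.
apply ball_R_abs in Hb. simpl in Hb. apply ball_R_abs.
assert (H1 : Rabs (t - x) < d) by (eapply Rlt_le_trans; [exact Hb|apply Rmin_r]).
assert (H2 : Rabs (t - x) < del) by (eapply Rlt_le_trans; [exact Hb|apply Rmin_l]).
rewrite (E t Dt H1), (E x Dx) by (rewrite Rminus_diag, Rabs_R0; auto).
specialize (Hdel (t - x)). replace (x + (t - x)) with t in Hdel by ring.
apply Hdel; auto. lra.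
Qed.

Lemma deriv_within_of_derive (g : R -> R) (x l : R) : D x ->
  is_derive g x l -> is_deriv_within D g x l.
Proof.
intros Dx H. apply (deriv_within_of_derive_near g g); auto.
exists 1. split; auto. lra.
Qed.

End DerivWithin.

Lemma deriv_refl (u : R -> R) (x l : R) : I01 x ->
  is_deriv_within I01 u (1 - x) l ->
  is_deriv_within I01 (fun t => u (1 - t)) x (- l).
Proof.
intros Ix H.
apply filterlim_ext_loc
  with (fun t => - ((u (1 - t) - u (1 - x)) / ((1 - t) - (1 - x)))).
- apply punctured_forall. intros t _ Ht. field. lra.
- apply lim_opp.
  apply (filterlim_comp _ _ _ (fun t => 1 - t) (fun s => (u s - u (1 - x)) / (s - (1 - x)))
           _ (punctured I01 (1 - x))); [|exact H].
  intros P [eps HP]. exists eps. intros t Hb [It Ht]. apply HP.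
  + apply ball_R_abs; apply ball_R_abs in Hb.
    replace (1 - t - (1 - x)) with (- (t - x)) by ring. rewrite Rabs_Ropp. auto.
  + destruct It. split; [split|]; lra.
Qed.

(** * Continuity and C^1, C^2 regularity on the closed unit square *)

Definition cont_I01 (u : R -> R) : Prop :=
  forall x, I01 x -> filterlim u (within I01 (locally x)) (locally (u x)).

Lemma cont_plus (g h : R -> R -> R) : cont_on_square g -> cont_on_square h ->
  cont_on_square (fun S C => g S C + h S C).
Proof. intros Hg Hh S C HS HC. apply lim_plus; auto. Qed.

Lemma cont_opp (g : R -> R -> R) : cont_on_square g ->
  cont_on_square (fun S C => - g S C).
Proof. intros Hg S C HS HC. apply lim_opp; auto. Qed.

Lemma cont_mult (g h : R -> R -> R) : cont_on_square g -> cont_on_square h ->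
  cont_on_square (fun S C => g S C * h S C).
Proof. intros Hg Hh S C HS HC. apply lim_mult; auto. Qed.

Lemma cont_inv (g : R -> R -> R) : cont_on_square g ->
  (forall S C, I01 S -> I01 C -> g S C <> 0) ->
  cont_on_square (fun S C => / g S C).
Proof. intros Hg Hn S C HS HC. apply lim_inv; auto. Qed.

Lemma cont_const (k : R) : cont_on_square (fun _ _ => k).
Proof. intros S C HS HC. apply filterlim_const. Qed.

Lemma cont_snd : cont_on_square (fun _ C => C).
Proof.
intros S C HS HC P [eps HP]. exists eps. intros p [_ Hp] _. apply HP, Hp.
Qed.

Lemma cont_fst (u : R -> R) : cont_I01 u -> cont_on_square (fun S _ => u S).
Proof.
intros Hu S C HS HC.
apply (filterlim_comp _ _ _ fst u _ (within I01 (locally S))); [|apply Hu; auto].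
intros P [eps HP]. exists eps. intros p [Hp _] [H1 _]. apply HP; auto.
Qed.

Definition partials_on_square (g gS gC : R -> R -> R) : Prop :=
  cont_on_square g /\ cont_on_square gS /\ cont_on_square gC /\
  forall S C, I01 S -> I01 C -> dS g S C (gS S C) /\ dC g S C (gC S C).

Definition C1_square (g : R -> R -> R) : Prop :=
  exists gS gC, partials_on_square g gS gC.

Definition C2_square (g : R -> R -> R) : Prop :=
  exists gS gC, partials_on_square g gS gC /\ C1_square gS /\ C1_square gC.

Lemma C2_square_unit_square (g : R -> R -> R) :
  C2_square g -> C2_on_unit_square g.
Proof.
intros (gS & gC & (Cg & CgS & CgC & Dg) & (gSS & gSC & (_ & CSS & CSC & DS))
        & (gCS & gCC & (_ & CCS & CCC & DC))).
exists gS, gC, gSS, gSC, gCS, gCC. repeat split; auto;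
  try apply Dg; try apply DS; try apply DC; auto.
Qed.

Lemma partials_plus (g gS gC h hS hC : R -> R -> R) :
  partials_on_square g gS gC -> partials_on_square h hS hC ->
  partials_on_square (fun S C => g S C + h S C)
    (fun S C => gS S C + hS S C) (fun S C => gC S C + hC S C).
Proof.
intros (Cg & CgS & CgC & Dg) (Ch & ChS & ChC & Dh).
repeat split; try apply cont_plus; auto; apply deriv_plus;
  (apply Dg || apply Dh); auto.
Qed.

Lemma partials_opp (g gS gC : R -> R -> R) : partials_on_square g gS gC ->
  partials_on_square (fun S C => - g S C) (fun S C => - gS S C) (fun S C => - gC S C).
Proof.
intros (Cg & CgS & CgC & Dg).
repeat split; try apply cont_opp; auto; apply deriv_opp; apply Dg; auto.
Qed.

Lemma partials_mult (g gS gC h hS hC : R -> R -> R) :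
  partials_on_square g gS gC -> partials_on_square h hS hC ->
  partials_on_square (fun S C => g S C * h S C)
    (fun S C => gS S C * h S C + g S C * hS S C)
    (fun S C => gC S C * h S C + g S C * hC S C).
Proof.
intros (Cg & CgS & CgC & Dg) (Ch & ChS & ChC & Dh).
repeat split; try (apply cont_plus; apply cont_mult; auto); try apply cont_mult; auto.
- apply (deriv_mult I01 (fun t => g t C) (fun t => h t C)); (apply Dg || apply Dh); auto.
- apply (deriv_mult I01 (fun t => g S t) (fun t => h S t)); (apply Dg || apply Dh); auto.
Qed.

Lemma partials_inv (g gS gC : R -> R -> R) : partials_on_square g gS gC ->
  (forall S C, I01 S -> I01 C -> g S C <> 0) ->
  partials_on_square (fun S C => / g S C)
    (fun S C => - gS S C * / (g S C * g S C))
    (fun S C => - gC S C * / (g S C * g S C)).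
Proof.
intros (Cg & CgS & CgC & Dg) Hn.
assert (Hn2 : forall S C, I01 S -> I01 C -> g S C * g S C <> 0).
{ intros. apply Rmult_integral_contrapositive. auto. }
repeat split; try apply cont_inv; auto;
  try (apply cont_mult; [apply cont_opp; auto|apply cont_inv; auto; apply cont_mult; auto]).
- apply (deriv_inv I01 (fun t => g t C)); [intros; apply Hn; auto|auto|apply Dg; auto].
- apply (deriv_inv I01 (fun t => g S t)); [intros; apply Hn; auto|auto|apply Dg; auto].
Qed.

Lemma partials_const (k : R) :
  partials_on_square (fun _ _ => k) (fun _ _ => 0) (fun _ _ => 0).
Proof.
refine (conj (cont_const k) (conj (cont_const 0) (conj (cont_const 0) _))).
intros S C _ _. unfold dS, dC; simpl. split; apply deriv_const.
Qed.

Lemma partials_snd : partials_on_square (fun _ C => C) (fun _ _ => 0) (fun _ _ => 1).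
Proof.
refine (conj cont_snd (conj (cont_const 0) (conj (cont_const 1) _))).
intros S C _ _. unfold dS, dC; simpl. split; [apply deriv_const|apply deriv_id].
Qed.

Definition C1_I01 (u u' : R -> R) : Prop :=
  cont_I01 u /\ cont_I01 u' /\ forall x, I01 x -> is_deriv_within I01 u x (u' x).

Definition C2_I01 (u : R -> R) : Prop :=
  exists u' u'', C1_I01 u u' /\ C1_I01 u' u''.

Lemma partials_fst (u u' : R -> R) : C1_I01 u u' ->
  partials_on_square (fun S _ => u S) (fun S _ => u' S) (fun _ _ => 0).
Proof.
intros (Cu & Cu' & Du).
refine (conj (cont_fst u Cu) (conj (cont_fst u' Cu') (conj (cont_const 0) _))).
intros S C HS _. unfold dS, dC; simpl. split; [apply Du; auto|apply deriv_const].
Qed.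

Lemma C1_plus (g h : R -> R -> R) :
  C1_square g -> C1_square h -> C1_square (fun S C => g S C + h S C).
Proof. intros (? & ? & G) (? & ? & H). do 2 eexists. apply partials_plus; eauto. Qed.

Lemma C1_opp (g : R -> R -> R) : C1_square g -> C1_square (fun S C => - g S C).
Proof. intros (? & ? & G). do 2 eexists. apply partials_opp; eauto. Qed.

Lemma C1_mult (g h : R -> R -> R) :
  C1_square g -> C1_square h -> C1_square (fun S C => g S C * h S C).
Proof. intros (? & ? & G) (? & ? & H). do 2 eexists. apply partials_mult; eauto. Qed.

Lemma C1_inv (g : R -> R -> R) : C1_square g ->
  (forall S C, I01 S -> I01 C -> g S C <> 0) -> C1_square (fun S C => / g S C).
Proof. intros (? & ? & G) Hn. do 2 eexists. apply partials_inv; eauto. Qed.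

Lemma C1_const (k : R) : C1_square (fun _ _ => k).
Proof. do 2 eexists. apply partials_const. Qed.

Lemma C1_of_C2 (g : R -> R -> R) : C2_square g -> C1_square g.
Proof. intros (? & ? & G & _). do 2 eexists. eauto. Qed.

Lemma C2_plus (g h : R -> R -> R) :
  C2_square g -> C2_square h -> C2_square (fun S C => g S C + h S C).
Proof.
intros (? & ? & G & GS & GC) (? & ? & H & HS & HC).
do 2 eexists. split; [apply partials_plus; eauto|split; apply C1_plus; auto].
Qed.

Lemma C2_mult (g h : R -> R -> R) :
  C2_square g -> C2_square h -> C2_square (fun S C => g S C * h S C).
Proof.
intros G H. pose proof (C1_of_C2 _ G) as G1. pose proof (C1_of_C2 _ H) as H1.
destruct G as (? & ? & G & GS & GC), H as (? & ? & H & HS & HC).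
do 2 eexists. split; [apply partials_mult; eauto|].
split; apply C1_plus; apply C1_mult; auto.
Qed.

Lemma C2_inv (g : R -> R -> R) : C2_square g ->
  (forall S C, I01 S -> I01 C -> g S C <> 0) -> C2_square (fun S C => / g S C).
Proof.
intros G Hn. pose proof (C1_of_C2 _ G) as G1.
destruct G as (? & ? & G & GS & GC).
assert (Hn2 : forall S C, I01 S -> I01 C -> g S C * g S C <> 0).
{ intros. apply Rmult_integral_contrapositive. auto. }
do 2 eexists. split; [apply partials_inv; eauto|].
split; apply C1_mult; try apply C1_opp; auto; apply C1_inv; auto; apply C1_mult; auto.
Qed.

Lemma C2_div (g h : R -> R -> R) : C2_square g -> C2_square h ->
  (forall S C, I01 S -> I01 C -> h S C <> 0) -> C2_square (fun S C => g S C / h S C).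
Proof. intros G H Hn. exact (C2_mult _ _ G (C2_inv _ H Hn)). Qed.

Lemma C2_const (k : R) : C2_square (fun _ _ => k).
Proof. do 2 eexists. split; [apply partials_const|split; apply C1_const]. Qed.

Lemma C2_snd : C2_square (fun _ C => C).
Proof. do 2 eexists. split; [apply partials_snd|split; apply C1_const]. Qed.

Lemma C2_fst (u : R -> R) : C2_I01 u -> C2_square (fun S _ => u S).
Proof.
intros (u' & u'' & Hu & Hu').
do 2 eexists. split; [apply partials_fst; eauto|split; [|apply C1_const]].
do 2 eexists. apply partials_fst; eauto.
Qed.

Lemma cont_I01_const (k : R) : cont_I01 (fun _ => k).
Proof. intros x _. apply filterlim_const. Qed.

Lemma cont_I01_of_continuous_near (g h : R -> R) (x : R) : I01 x -> continuous h x ->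
  (exists d, 0 < d /\ forall t, I01 t -> Rabs (t - x) < d -> g t = h t) ->
  filterlim g (within I01 (locally x)) (locally (g x)).
Proof.
intros Ix Hh (d & Hd & E).
rewrite (E x Ix) by (rewrite Rminus_diag, Rabs_R0; auto).
apply filterlim_ext_loc with h.
- exists (mkposreal _ Hd). intros t Hb It. symmetry. apply E; auto.
- intros P HP. apply Hh in HP. unfold filtermap, within in *.
  apply filter_imp with (2 := HP). auto.
Qed.

Lemma C1_I01_scal (k : R) (u u' : R -> R) : C1_I01 u u' ->
  C1_I01 (fun t => k * u t) (fun t => k * u' t).
Proof.
intros (Cu & Cu' & Du). split; [|split].
- intros x Ix. apply lim_mult; [apply filterlim_const|auto].
- intros x Ix. apply lim_mult; [apply filterlim_const|auto].
- intros x Ix. apply deriv_scal. auto.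
Qed.

Lemma C2_I01_scal (k : R) (u : R -> R) : C2_I01 u -> C2_I01 (fun t => k * u t).
Proof.
intros (u' & u'' & H & H'). do 2 eexists. split; apply C1_I01_scal; eauto.
Qed.

Lemma refl_within (x : R) : filterlim (fun t => 1 - t)
  (within I01 (locally x)) (within I01 (locally (1 - x))).
Proof.
intros P [eps HP]. exists eps. intros t Hb It. apply HP.
- apply ball_R_abs; apply ball_R_abs in Hb.
  replace (1 - t - (1 - x)) with (- (t - x)) by ring. rewrite Rabs_Ropp. auto.
- destruct It. split; lra.
Qed.

Lemma cont_I01_refl (u : R -> R) : cont_I01 u -> cont_I01 (fun t => u (1 - t)).
Proof.
intros H x Ix.
apply (filterlim_comp _ _ _ (fun t => 1 - t) u _ (within I01 (locally (1 - x)))).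
- apply refl_within.
- apply H. destruct Ix. split; lra.
Qed.

Lemma C1_I01_refl (u u' : R -> R) : C1_I01 u u' ->
  C1_I01 (fun t => u (1 - t)) (fun t => - u' (1 - t)).
Proof.
intros (Cu & Cu' & Du). split; [|split].
- apply cont_I01_refl. auto.
- intros x Ix. apply lim_opp. apply cont_I01_refl; auto.
- intros x Ix. apply deriv_refl; auto. apply Du. destruct Ix. split; lra.
Qed.

Lemma C1_I01_opp (u u' : R -> R) : C1_I01 u u' ->
  C1_I01 (fun t => - u t) (fun t => - u' t).
Proof.
intros (Cu & Cu' & Du). split; [|split].
- intros x Ix. apply lim_opp. auto.
- intros x Ix. apply lim_opp. auto.
- intros x Ix. apply deriv_opp. auto.
Qed.

Lemma C2_I01_refl (u : R -> R) : C2_I01 u -> C2_I01 (fun t => u (1 - t)).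
Proof.
intros (u' & u'' & H & H').
exists (fun t => - u' (1 - t)), (fun t => - - u'' (1 - t)).
split; [apply C1_I01_refl; auto|].
exact (C1_I01_opp _ _ (C1_I01_refl _ _ H')).
Qed.

Lemma C1_I01_of_derive (u u' : R -> R) : (forall x, is_derive u x (u' x)) ->
  (forall x, continuous u' x) -> C1_I01 u u'.
Proof.
intros Du Cu'.
split; [|split].
- intros x Ix. apply (cont_I01_of_continuous_near u u x); auto.
  + apply (@ex_derive_continuous R_AbsRing R_NormedModule). eexists. apply Du.
  + exists 1. split; auto. lra.
- intros x Ix. apply (cont_I01_of_continuous_near u' u' x); auto.
  exists 1. split; auto. lra.
- intros x Ix. apply deriv_within_of_derive; auto.
Qed.

Lemma C2_I01_of_derive (u u' u'' : R -> R) : (forall x, is_derive u x (u' x)) ->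
  (forall x, is_derive u' x (u'' x)) -> (forall x, continuous u'' x) -> C2_I01 u.
Proof.
intros D1 D2 C3. exists u', u''. split; apply C1_I01_of_derive; auto.
intros x. apply (@ex_derive_continuous R_AbsRing R_NormedModule). eexists. apply D2.
Qed.

(** * Powers S^n, n >= 2, on [0,1] *)

Lemma rpow_pos (x b : R) : 0 < x -> rpow x b = Rpower x b.
Proof. intros Hx. unfold rpow. destruct (Rle_dec x 0); lra. Qed.

Lemma rpow_0 (b : R) : rpow 0 b = 0.
Proof. unfold rpow. destruct (Rle_dec 0 0); lra. Qed.

Lemma rpow_ge0 (x b : R) : 0 <= rpow x b.
Proof. unfold rpow. destruct (Rle_dec x 0); [lra|]. left. apply exp_pos. Qed.

Lemma rpow_gt0 (x b : R) : 0 < x -> 0 < rpow x b.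
Proof. intros Hx. rewrite rpow_pos by auto. apply exp_pos. Qed.

Lemma rpow_exp1 (t : R) : I01 t -> rpow t 1 = t.
Proof.
intros [H0 H1]. destruct (Req_dec t 0) as [->|Ht]; [apply rpow_0|].
rewrite rpow_pos by lra. apply Rpower_1. lra.
Qed.

Lemma rpow_near_pos (x b : R) : 0 < x ->
  exists d, 0 < d /\ forall t, I01 t -> Rabs (t - x) < d -> rpow t b = Rpower t b.
Proof.
intros Hx. exists x. split; auto. intros t _ Ht.
apply Rabs_def2 in Ht. apply rpow_pos. lra.
Qed.

Lemma Rpower_small (b : R) : 0 < b -> forall eps, 0 < eps ->
  exists d, 0 < d /\ forall t, 0 < t < d -> Rpower t b < eps.
Proof.
intros Hb eps He. exists (exp (ln eps / b)). split; [apply exp_pos|].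
intros t [H1 H2]. unfold Rpower. rewrite <- (exp_ln eps) by auto.
apply exp_increasing.
apply ln_increasing in H2; auto. rewrite ln_exp in H2.
apply (Rmult_lt_compat_l b) in H2; auto.
replace (b * (ln eps / b)) with (ln eps) in H2 by (field; lra). lra.
Qed.

Lemma rpow_cont (b : R) : 0 < b -> cont_I01 (fun t => rpow t b).
Proof.
intros Hb x Ix. destruct (Req_dec x 0) as [->|Hx].
- rewrite rpow_0. apply filterlim_locally. intros eps.
  destruct (Rpower_small b Hb eps (cond_pos eps)) as (d & Hd & Hs).
  exists (mkposreal _ Hd). intros t Ht [It0 It1]. change R in t.
  change (Rabs (t - 0) < d) in Ht. apply ball_R_abs.
  rewrite Rminus_0_r in *. destruct (Req_dec t 0) as [->|Ht0].
  + rewrite rpow_0, Rabs_R0. apply cond_pos.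
  + rewrite rpow_pos by lra. rewrite Rabs_pos_eq by (left; apply exp_pos).
    apply Hs. rewrite Rabs_pos_eq in Ht; lra.
- apply (cont_I01_of_continuous_near (fun t => rpow t b) (fun t => Rpower t b) x); auto.
  + apply (@ex_derive_continuous R_AbsRing R_NormedModule).
    exists (b * Rpower x (b - 1)). apply is_derive_Reals.
    apply derivable_pt_lim_power. destruct Ix; lra.
  + apply rpow_near_pos. destruct Ix; lra.
Qed.

Lemma rpow_deriv (b x : R) : 1 < b -> I01 x ->
  is_deriv_within I01 (fun t => rpow t b) x (b * rpow x (b - 1)).
Proof.
intros Hb Ix. destruct (Req_dec x 0) as [->|Hx].
- rewrite rpow_0, Rmult_0_r. apply filterlim_locally. intros eps.
  destruct (Rpower_small (b - 1) ltac:(lra) eps (cond_pos eps)) as (d & Hd & Hs).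
  exists (mkposreal _ Hd). intros t Ht [[It0 It1] Ht0]. change R in t.
  change (Rabs (t - 0) < d) in Ht. apply ball_R_abs.
  rewrite Rminus_0_r in *. rewrite rpow_0, rpow_pos by lra.
  replace (Rpower t b) with (Rpower t (b - 1) * t).
  2: { rewrite <- (Rpower_1 t) at 2 by lra. rewrite <- Rpower_plus. f_equal. ring. }
  replace ((Rpower t (b - 1) * t - 0) / (t - 0)) with (Rpower t (b - 1)) by (field; lra).
  rewrite Rabs_pos_eq by (left; apply exp_pos).
  apply Hs. rewrite Rabs_pos_eq in Ht; lra.
- assert (Hx' : 0 < x) by (destruct Ix; lra).
  rewrite rpow_pos by auto.
  apply (deriv_within_of_derive_near _ _ (fun t => Rpower t b)); auto.
  + apply is_derive_Reals, derivable_pt_lim_power. auto.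
  + apply rpow_near_pos. auto.
Qed.

Lemma C1_I01_rpow (b : R) : 1 < b ->
  C1_I01 (fun t => rpow t b) (fun t => b * rpow t (b - 1)).
Proof.
intros Hb. split; [|split].
- apply rpow_cont. lra.
- intros x Ix. apply lim_mult; [apply filterlim_const|apply rpow_cont; [lra|exact Ix]].
- intros x Ix. apply rpow_deriv; auto.
Qed.

(* t^1 is C^1 on [0,1] with derivative 1 (the case b = 1, where b t^(b-1)
   would not be continuous at 0). *)
Lemma C1_I01_rpow_exp1 : C1_I01 (fun t => rpow t 1) (fun _ => 1).
Proof.
split; [|split].
- apply rpow_cont. lra.
- apply cont_I01_const.
- intros x Ix. apply (deriv_ext I01 (fun t => t)); auto; [|apply deriv_id].
  intros t It. symmetry. apply rpow_exp1. auto.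
Qed.

(* S^n is C^2 on [0,1] for n >= 2; the second derivative is constant when
   n = 2 and n (n - 1) S^(n-2) when n > 2. *)
Lemma C2_I01_rpow (n : R) : 2 <= n -> C2_I01 (fun t => rpow t n).
Proof.
intros Hn. exists (fun t => n * rpow t (n - 1)).
destruct (Req_dec n 2) as [E|E].
- exists (fun _ => n * 1). split; [apply C1_I01_rpow; lra|].
  apply C1_I01_scal. replace (n - 1) with 1 by lra. exact C1_I01_rpow_exp1.
- exists (fun t => n * ((n - 1) * rpow t (n - 1 - 1))).
  split; apply C1_I01_rpow || (apply C1_I01_scal, C1_I01_rpow); lra.
Qed.

(** * The dry-out factor F2 *)

Lemma one_plus_sq_pos (y : R) : 0 < 1 + y ^ 2.
Proof. pose proof (pow2_ge_0 y). lra. Qed.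

Definition F2_arg (epdry fmdry Swc Sgr S : R) : R := epdry * (Sw Swc Sgr S - fmdry).

Definition F2' (epdry fmdry Swc Sgr S : R) : R :=
  / PI * (epdry * (1 - Swc - Sgr) / (1 + F2_arg epdry fmdry Swc Sgr S ^ 2)).

Definition F2'' (epdry fmdry Swc Sgr S : R) : R :=
  / PI * (epdry * (1 - Swc - Sgr) *
    (- (2 * (epdry * (1 - Swc - Sgr)) * F2_arg epdry fmdry Swc Sgr S)
     / (1 + F2_arg epdry fmdry Swc Sgr S ^ 2) ^ 2)).

Lemma F2_derive (epdry fmdry Swc Sgr x : R) :
  is_derive (F2 epdry fmdry Swc Sgr) x (F2' epdry fmdry Swc Sgr x).
Proof.
unfold F2, F2', F2_arg, Sw. auto_derive; auto.
field. split; [apply Rgt_not_eq, one_plus_sq_pos|apply PI_neq0].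
Qed.

Lemma F2'_derive (epdry fmdry Swc Sgr x : R) :
  is_derive (F2' epdry fmdry Swc Sgr) x (F2'' epdry fmdry Swc Sgr x).
Proof.
unfold F2', F2'', F2_arg, Sw, Rminus. auto_derive;
  generalize (epdry * (Swc + x * (1 + - Swc + - Sgr) + - fmdry)); intros z.
- apply Rgt_not_eq. nra.
- field. split; [apply Rgt_not_eq; nra|apply PI_neq0].
Qed.

Lemma F2''_continuous (epdry fmdry Swc Sgr x : R) :
  continuous (F2'' epdry fmdry Swc Sgr) x.
Proof.
apply (@ex_derive_continuous R_AbsRing R_NormedModule).
unfold F2'', F2_arg, Sw, Rminus. auto_derive.
generalize (epdry * (Swc + x * (1 + - Swc + - Sgr) + - fmdry)); intros z.
apply Rgt_not_eq. nra.
Qed.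

Lemma C2_I01_F2 (epdry fmdry Swc Sgr : R) : C2_I01 (F2 epdry fmdry Swc Sgr).
Proof.
apply (C2_I01_of_derive _ _ _ (F2_derive epdry fmdry Swc Sgr)
         (F2'_derive epdry fmdry Swc Sgr) (F2''_continuous epdry fmdry Swc Sgr)).
Qed.

(* F2 is positive since arctan > -pi/2. *)
Lemma F2_pos (epdry fmdry Swc Sgr S : R) : 0 < F2 epdry fmdry Swc Sgr S.
Proof.
unfold F2. destruct (atan_bound (epdry * (Sw Swc Sgr S - fmdry))) as [Hlow _].
pose proof PI_RGT_0 as Hpi.
assert (H : / PI * (- PI / 2) < / PI * atan (epdry * (Sw Swc Sgr S - fmdry))).
{ apply Rmult_lt_compat_l; auto. apply Rinv_0_lt_compat. auto. }
replace (/ PI * (- PI / 2)) with (- / 2) in H by (field; lra). lra.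
Qed.

(* F2 is increasing in S: the water saturation Sw increases with S. *)
Lemma F2'_pos (epdry fmdry Swc Sgr S : R) : 0 < epdry -> Swc + Sgr < 1 ->
  0 < F2' epdry fmdry Swc Sgr S.
Proof.
intros He Hs. unfold F2'. pose proof PI_RGT_0.
apply Rmult_lt_0_compat; [apply Rinv_0_lt_compat; auto|].
apply Rdiv_lt_0_compat; [apply Rmult_lt_0_compat; lra|apply one_plus_sq_pos].
Qed.

(** * The fractional flow function *)

Section FractionalFlow.
Variables krw0 krg0 muw mug fmmob epdry nw ng Swc Sgr fmdry : R.
Hypotheses (Hkrw0 : 0 < krw0) (Hkrg0 : 0 < krg0) (Hmuw : 0 < muw) (Hmug : 0 < mug)
  (Hfmmob : 0 < fmmob) (Hepdry : 0 < epdry) (Hnw : 2 <= nw) (Hng : 2 <= ng)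
  (Hsum : Swc + Sgr < 1).

(* fw = kw / total_mob with total_mob = kw + (muw/mug) kgf, where kw = krw,
   kg = krg and kgf = krgf = kg / foam_factor, foam_factor = 1 + fmmob C F2
   being the reciprocal of the foam mobility reduction factor FM. *)
Definition visc_ratio : R := muw / mug.
Definition kw (S : R) : R := krw krw0 nw S.
Definition kg (S : R) : R := krg krg0 ng S.
Definition dryout (S : R) : R := F2 epdry fmdry Swc Sgr S.
Definition foam_factor (S C : R) : R := 1 + fmmob * C * dryout S.
Definition kgf (S C : R) : R := kg S / foam_factor S C.
Definition total_mob (S C : R) : R := kw S + visc_ratio * kgf S C.
Definition fw : R -> R -> R := fracflow krw0 krg0 muw mug nw ng fmmob epdry fmdry Swc Sgr.

Lemma fw_eq (S C : R) : fw S C = kw S / total_mob S C.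
Proof. reflexivity. Qed.

Definition kw' (S : R) : R := krw0 * (nw * rpow S (nw - 1)).
Definition kg' (S : R) : R := krg0 * - (ng * rpow (1 - S) (ng - 1)).
Definition foam_factor_S (S C : R) : R := fmmob * C * F2' epdry fmdry Swc Sgr S.
Definition kgf_S (S C : R) : R :=
  (kg' S * foam_factor S C - kg S * foam_factor_S S C) / foam_factor S C ^ 2.
Definition fw_S (S C : R) : R :=
  visc_ratio * (kw' S * kgf S C - kw S * kgf_S S C) / total_mob S C ^ 2.
Definition kgf_C (S C : R) : R :=
  - (kg S * (fmmob * dryout S)) / foam_factor S C ^ 2.
Definition fw_C (S C : R) : R :=
  - (kw S * (visc_ratio * kgf_C S C)) / total_mob S C ^ 2.

Lemma visc_ratio_pos : 0 < visc_ratio.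
Proof. apply Rdiv_lt_0_compat; auto. Qed.

Lemma kw_ge0 (S : R) : 0 <= kw S.
Proof. apply Rmult_le_pos; [lra|apply rpow_ge0]. Qed.

Lemma kw_pos (S : R) : 0 < S -> 0 < kw S.
Proof. intros. apply Rmult_lt_0_compat; [lra|apply rpow_gt0; auto]. Qed.

Lemma kg_ge0 (S : R) : 0 <= kg S.
Proof. apply Rmult_le_pos; [lra|apply rpow_ge0]. Qed.

Lemma kg_pos (S : R) : S < 1 -> 0 < kg S.
Proof. intros. apply Rmult_lt_0_compat; [lra|apply rpow_gt0; lra]. Qed.

Lemma foam_factor_pos (S C : R) : I01 C -> 0 < foam_factor S C.
Proof.
intros [HC _]. pose proof (F2_pos epdry fmdry Swc Sgr S).
assert (0 <= fmmob * C * dryout S)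
  by (apply Rmult_le_pos; [apply Rmult_le_pos|]; unfold dryout; lra).
unfold foam_factor. lra.
Qed.

Lemma kgf_ge0 (S C : R) : I01 C -> 0 <= kgf S C.
Proof. intros HC. apply Rdiv_le_0_compat; [apply kg_ge0|apply foam_factor_pos; auto]. Qed.

(* The denominator never vanishes: kw > 0 for S > 0, and kgf > 0 at S = 0. *)
Lemma total_mob_pos (S C : R) : I01 S -> I01 C -> 0 < total_mob S C.
Proof.
intros [HS0 HS1] HC. pose proof visc_ratio_pos. unfold total_mob.
destruct (Req_dec S 0) as [->|HS].
- assert (0 < kgf 0 C) by (apply Rdiv_lt_0_compat; [apply kg_pos; lra|apply foam_factor_pos; auto]).
  pose proof (kw_ge0 0). nra.
- pose proof (kw_pos S ltac:(lra)). pose proof (kgf_ge0 S C HC). nra.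
Qed.

Lemma foam_factor_neq0 (S C : R) : I01 C -> foam_factor S C <> 0.
Proof. intros. apply Rgt_not_eq, foam_factor_pos. auto. Qed.

Lemma total_mob_neq0 (S C : R) : I01 S -> I01 C -> total_mob S C <> 0.
Proof. intros. apply Rgt_not_eq, total_mob_pos; auto. Qed.

Lemma kw_deriv (S : R) : I01 S -> is_deriv_within I01 kw S (kw' S).
Proof. intros HS. apply deriv_scal, rpow_deriv; auto; lra. Qed.

Lemma kg_deriv (S : R) : I01 S -> is_deriv_within I01 kg S (kg' S).
Proof.
intros HS. apply deriv_scal.
apply (deriv_refl (fun s => rpow s ng)); auto.
apply rpow_deriv; [lra|destruct HS; split; lra].
Qed.

Lemma kgf_deriv_S (S C : R) : I01 S -> I01 C ->
  is_deriv_within I01 (fun t => kgf t C) S (kgf_S S C).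
Proof.
intros HS HC. apply (deriv_div I01 kg (fun t => foam_factor t C)); auto.
- intros. apply foam_factor_neq0. auto.
- apply kg_deriv. auto.
- eapply deriv_eq.
  + apply (deriv_plus I01 (fun _ => 1) (fun t => fmmob * C * dryout t)); [apply deriv_const|].
    apply deriv_scal, deriv_within_of_derive; auto. apply F2_derive.
  + unfold foam_factor_S. ring.
Qed.

Lemma fw_deriv_S (S C : R) : I01 S -> I01 C -> dS fw S C (fw_S S C).
Proof.
intros HS HC. unfold dS.
eapply deriv_eq.
- apply (deriv_div I01 kw (fun t => total_mob t C)); auto.
  + intros. apply total_mob_neq0; auto.
  + apply kw_deriv. auto.
  + apply (deriv_plus I01 kw (fun t => visc_ratio * kgf t C)); [apply kw_deriv; auto|].
    apply deriv_scal, kgf_deriv_S; auto.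
- unfold fw_S, total_mob. field. apply total_mob_neq0; auto.
Qed.

Lemma kgf_deriv_C (S C : R) : I01 C ->
  is_deriv_within I01 (fun t => kgf S t) C (kgf_C S C).
Proof.
intros HC. eapply deriv_eq.
- apply (deriv_div I01 (fun _ => kg S) (fun t => foam_factor S t)); auto.
  + intros. apply foam_factor_neq0. auto.
  + apply deriv_const.
  + apply (deriv_plus I01 (fun _ => 1) (fun t => fmmob * t * dryout S)); [apply deriv_const|].
    apply (deriv_mult I01 (fun t => fmmob * t) (fun _ => dryout S));
      [apply deriv_scal, deriv_id|apply deriv_const].
- unfold kgf_C. field. apply foam_factor_neq0. auto.
Qed.

Lemma fw_deriv_C (S C : R) : I01 S -> I01 C -> dC fw S C (fw_C S C).
Proof.
intros HS HC. unfold dC.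
eapply deriv_eq.
- apply (deriv_div I01 (fun _ => kw S) (fun t => total_mob S t)); auto.
  + intros. apply total_mob_neq0; auto.
  + apply deriv_const.
  + apply (deriv_plus I01 (fun _ => kw S) (fun t => visc_ratio * kgf S t)); [apply deriv_const|].
    apply deriv_scal, kgf_deriv_C; auto.
- unfold fw_C. field. apply total_mob_neq0; auto.
Qed.

Lemma fw_C2 : C2_on_unit_square fw.
Proof.
apply C2_square_unit_square.
assert (Ckw : C2_square (fun S _ => kw S))
  by exact (C2_fst _ (C2_I01_scal krw0 _ (C2_I01_rpow nw Hnw))).
assert (Ckg : C2_square (fun S _ => kg S))
  by exact (C2_fst _ (C2_I01_scal krg0 _ (C2_I01_refl _ (C2_I01_rpow ng Hng)))).
assert (Cfoam : C2_square foam_factor).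
{ apply (C2_plus (fun _ _ => 1)); [apply C2_const|].
  apply (C2_mult (fun _ C => fmmob * C)).
  - apply (C2_mult (fun _ _ => fmmob)); [apply C2_const|apply C2_snd].
  - exact (C2_fst _ (C2_I01_F2 epdry fmdry Swc Sgr)). }
assert (Ckgf : C2_square kgf).
{ apply (C2_div (fun S _ => kg S)); auto. intros. apply foam_factor_neq0. auto. }
assert (Ctotal : C2_square total_mob).
{ apply (C2_plus (fun S _ => kw S)); auto.
  apply (C2_mult (fun _ _ => visc_ratio)); auto. apply C2_const. }
apply (C2_div (fun S _ => kw S)); auto. exact total_mob_neq0.
Qed.

(* kw and kw' vanish at S = 0, kg and kg' at S = 1 (as n_w, n_g > 1). *)
Lemma kw'_0 : kw' 0 = 0.
Proof. unfold kw'. rewrite rpow_0. ring. Qed.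

Lemma kw_0 : kw 0 = 0.
Proof. unfold kw, krw. rewrite rpow_0. ring. Qed.

Lemma kg'_1 : kg' 1 = 0.
Proof. unfold kg'. rewrite Rminus_diag, rpow_0. ring. Qed.

Lemma kg_1 : kg 1 = 0.
Proof. unfold kg, krg. rewrite Rminus_diag, rpow_0. ring. Qed.

Lemma kgf_1 (C : R) : I01 C -> kgf 1 C = 0 /\ kgf_S 1 C = 0.
Proof.
intros HC. pose proof (foam_factor_neq0 1 C HC).
unfold kgf, kgf_S. rewrite kg_1, kg'_1. split; field; auto.
Qed.

Lemma fw_boundary (C : R) : I01 C ->
  fw 0 C = 0 /\ fw 1 C = 1 /\ dS fw 0 C 0 /\ dS fw 1 C 0.
Proof.
intros HC. assert (I0 : I01 0) by (split; lra). assert (I1 : I01 1) by (split; lra).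
destruct (kgf_1 C HC) as [K1 KS1].
assert (Den1 : total_mob 1 C = kw 1) by (unfold total_mob; rewrite K1; ring).
assert (N1 : 0 < kw 1) by (apply kw_pos; lra).
split; [|split; [|split]].
- rewrite fw_eq, kw_0. unfold Rdiv. ring.
- rewrite fw_eq, Den1. field. lra.
- eapply deriv_eq; [apply fw_deriv_S; auto|].
  unfold fw_S. rewrite kw'_0, kw_0. unfold Rdiv. ring.
- eapply deriv_eq; [apply fw_deriv_S; auto|].
  unfold fw_S. rewrite K1, KS1. unfold Rdiv. ring.
Qed.

Lemma kgf_S_neg (S C : R) : 0 < S < 1 -> I01 C -> kgf_S S C < 0.
Proof.
intros HS HC.
assert (HG' : kg' S < 0).
{ unfold kg'. assert (0 < ng * rpow (1 - S) (ng - 1))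
    by (apply Rmult_lt_0_compat; [lra|apply rpow_gt0; lra]). nra. }
assert (HES : 0 <= foam_factor_S S C).
{ unfold foam_factor_S. pose proof (F2'_pos epdry fmdry Swc Sgr S Hepdry Hsum). destruct HC.
  apply Rmult_le_pos; [apply Rmult_le_pos|]; lra. }
pose proof (foam_factor_pos S C HC). pose proof (kg_pos S ltac:(lra)).
unfold kgf_S. apply Rdiv_neg_pos; [nra|apply pow_lt; auto].
Qed.

(* Monotonicity in the interior: fw_S > 0 since kw' kgf > 0 > kw kgf_S,
   and fw_C > 0 since foam reduces the gas mobility (kgf_C < 0). *)
Lemma fw_S_pos (S C : R) : 0 < S < 1 -> I01 C -> 0 < fw_S S C.
Proof.
intros HS HC.
assert (HN' : 0 < kw' S).
{ unfold kw'. apply Rmult_lt_0_compat; [lra|].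
  apply Rmult_lt_0_compat; [lra|apply rpow_gt0; lra]. }
assert (HK : 0 < kgf S C)
  by (apply Rdiv_lt_0_compat; [apply kg_pos|apply foam_factor_pos]; auto; lra).
pose proof (kw_pos S ltac:(lra)). pose proof (kgf_S_neg S C HS HC).
assert (0 < kw' S * kgf S C - kw S * kgf_S S C) by nra.
unfold fw_S. apply Rdiv_lt_0_compat; [apply Rmult_lt_0_compat; auto; apply visc_ratio_pos|].
apply pow_lt, total_mob_pos; auto. split; lra.
Qed.

Lemma fw_C_pos (S C : R) : 0 < S < 1 -> I01 C -> 0 < fw_C S C.
Proof.
intros HS HC.
assert (HKC : kgf_C S C < 0).
{ pose proof (foam_factor_pos S C HC). pose proof (kg_pos S ltac:(lra)).
  pose proof (F2_pos epdry fmdry Swc Sgr S).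
  unfold kgf_C. apply Rdiv_neg_pos; [|apply pow_lt; auto].
  assert (0 < kg S * (fmmob * dryout S)) by (unfold dryout; apply Rmult_lt_0_compat; nra). lra. }
pose proof (kw_pos S ltac:(lra)).
assert (0 < visc_ratio * - kgf_C S C) by (apply Rmult_lt_0_compat; [apply visc_ratio_pos|lra]).
unfold fw_C. apply Rdiv_lt_0_compat; [nra|].
apply pow_lt, total_mob_pos; auto. split; lra.
Qed.

End FractionalFlow.

Theorem mainTheorem7
  (krw0 krg0 muw mug fmmob epdry nw ng Swc Sgr fmdry : R)
  (Hkrw0 : 0 < krw0) (Hkrg0 : 0 < krg0) (Hmuw : 0 < muw) (Hmug : 0 < mug)
  (Hfmmob : 0 < fmmob) (Hepdry : 0 < epdry)
  (Hnw : 2 <= nw) (Hng : 2 <= ng)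
  (HSwc : 0 <= Swc) (HSgr : 0 <= Sgr) (Hsum : Swc + Sgr < 1) :
  let f := fracflow krw0 krg0 muw mug nw ng fmmob epdry fmdry Swc Sgr in
  C2_on_unit_square f /\
  (forall C, I01 C ->
     f 0 C = 0 /\ f 1 C = 1 /\ dS f 0 C 0 /\ dS f 1 C 0) /\
  (forall S C, 0 < S < 1 -> I01 C ->
     (exists l, dS f S C l /\ 0 < l) /\ (exists l, dC f S C l /\ 0 < l)).
Proof.
intros f. split; [|split].
- apply fw_C2; auto.
- intros C HC. apply fw_boundary; auto.
- intros S C HS HC. assert (IS : I01 S) by (split; lra). split.
  + eexists. split; [apply fw_deriv_S; auto|apply fw_S_pos; auto].
  + eexists. split; [apply fw_deriv_C; auto|apply fw_C_pos; auto].
Qed.
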